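(* Let $n\geq 1$ and let $c$ be the center of the star $K_{1,n}$ (the vertex of degree $n$; either vertex if $n=1$). Then $\uparrow^{2}K_{1,n}$ has Laplacian perfect state transfer between the vertices $(0,c)$ and $(1,c)$ (which have degree $2n$) if and only if $n$ is odd.
   Context: All graphs are simple, undirected and unweighted. $K_{1,n}$ is the star with one center adjacent to $n$ leaves. The blow-up $\uparrow^{2}G$ has vertex set $\mathbb{Z}_2\times V(G)$, with $(l,a)\sim(m,b)$ iff $a\sim b$ in $G$. A graph with Laplacian $L=D-A$ has Laplacian perfect state transfer between $a,b$ if $\exp(i\tau L)\mathbf{e}_a=\gamma\mathbf{e}_b$ for some $\tau>0$, $\gamma\in\mathbb{C}$. *)

From HB Require Import structures.
From mathcomp Require Import all_boot all_order all_algebra.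
From mathcomp Require Import all_classical all_reals topology normedtype sequences.
From mathcomp.real_closed Require Import complex.
Set Implicit Arguments. Unset Strict Implicit. Unset Printing Implicit Defensive.
Import Order.TTheory GRing.Theory Num.Theory.
Import numFieldNormedType.Exports.
Local Open Scope ring_scope.
Local Open Scope complex_scope.

(* Matrix exponential over C = R[i], entrywise limit of partial sums
   sum_{k<N} A^k / k!  (the series always converges). *)
Definition expmx (R : realType) (m : nat) (A : 'M[R[i]]_m) : 'M[R[i]]_m :=
  \matrix_(p, q) limn (fun N : nat =>
    ((\sum_(k < N) (k`!%:R)^-1 *: A ^+ k) p q : (R[i] : numFieldType))).

(* A simple graph on a finite vertex type T is given by a symmetric,
   irreflexive boolean relation e. Vertices are indexed in matrices via enum_rank. *)
Definition degree (T : finType) (e : rel T) (x : T) : nat := #|[set y | e x y]|.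

Definition laplacian (R : realType) (T : finType) (e : rel T) : 'M[R[i]]_#|T| :=
  \matrix_(p, q)
    ((if p == q then (degree e (enum_val p))%:R else 0)
     - (e (enum_val p) (enum_val q))%:R).

Definition evec (R : realType) (T : finType) (x : T) : 'cV[R[i]]_#|T| :=
  delta_mx (enum_rank x) 0.

Definition lap_PST (R : realType) (T : finType) (e : rel T) (a b : T) : Prop :=
  exists tau : R, 0 < tau /\
    exists gamma : R[i],
      expmx (('i * tau%:C) *: laplacian R e) *m evec R a = gamma *: evec R b.

Definition star_graph (n : nat) : rel 'I_n.+1 :=
  fun x y => (x == ord0) (+) (y == ord0).

Definition blowup2 (V : finType) (e : rel V) : rel ('I_2 * V) :=
  fun x y => e x.2 y.2.
Arguments star_graph n : clear implicits.

(* The vertex (0,c) of the blown-up star is the sum of three Laplacian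
   eigenvectors: the constant vector (eigenvalue 0), the vector separating the
   two copies of the centre from the leaves (eigenvalue 2(n+1)) and the
   antisymmetric vector on the two copies of the centre (eigenvalue 2n).  With
   w = e^(2 i tau), exp(i tau L) e_(0,c) is therefore P_0 + w^(n+1) P_1 + w^n P_2,
   a multiple of e_(1,c) exactly when w^(n+1) = 1 and w^n = -1.  These force
   w = -1 and (-1)^n = -1, i.e. n odd; conversely, for n odd, tau = pi/2 works. *)

From HB Require Import structures.
From mathcomp Require Import all_boot all_order all_algebra.
From mathcomp Require Import all_classical all_reals topology normedtype sequences trigo.
From mathcomp.real_closed Require Import complex.
From mathcomp Require Import ring.
Set Implicit Arguments. Unset Strict Implicit. Unset Printing Implicit Defensive.
Import Order.TTheory GRing.Theory Num.Theory.
Import numFieldNormedType.Exports.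
Local Open Scope ring_scope.
Local Open Scope complex_scope.
Local Open Scope classical_set_scope.

Lemma odd_of_exprS_eq1 (F : numDomainType) (w : F) n :
  w ^+ n.+1 = 1 -> w ^+ n = -1 -> odd n.
Proof.
move=> wSn wn; have w_N1 : w = -1.
  by apply/eqP; rewrite -eqr_oppLR -mulrN1 -wn -exprS wSn.
move: wn; rewrite w_N1 -signr_odd; case: (odd n) => //= /eqP.
by rewrite expr0 eq_sym eqNr oner_eq0.
Qed.

Section ImaginaryExponential.
Variable R : realType.
Local Notation C := (R[i] : numFieldType).

Definition exp_partial (N : nat) (z : C) : C := \sum_(k < N) (k`!%:R)^-1 * z ^+ k.

Definition expi (t : R) : C := (cos t)%:C + 'i * (sin t)%:C.

Lemma cvg_complex_real (u : nat -> R) (a : R) :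
  u @ \oo --> a -> (fun N => (u N)%:C : C) @ \oo --> (a%:C : C).
Proof.
move=> /cvgrPdist_lt ua; apply/cvgrPdist_lt => eps.
rewrite ltcE /= => /andP[/eqP eps_real eps_gt0].
have -> : eps = (complex.Re eps)%:C by rewrite [LHS]complexE eps_real mulr0 addr0.
near=> N; rewrite -rmorphB normc_def /= expr0n /= addr0 sqrtr_sqr ltcR.
near: N; exact: ua.
Unshelve. all: by end_near.
Qed.

Lemma exp_partial_termE (t : R) k :
  (k`!%:R)^-1 * ('i * t%:C) ^+ k = (cos_coeff t k)%:C + 'i * (sin_coeff t k)%:C :> C.
Proof.
have i_double m : 'i ^+ m.*2 = (-1) ^+ m :> C by rewrite -mul2n exprM sqr_i.
rewrite /cos_coeff /sin_coeff /= exprMn.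
have [k_odd|k_even] := boolP (odd k).
  have k_def : k = (k./2).*2.+1 by rewrite -[LHS](odd_double_half k) k_odd.
  have -> : k.-1./2 = k./2 by rewrite [in LHS]k_def /= doubleK.
  rewrite [in 'i ^+ _]k_def exprS i_double /= -?exprnP.
  by rewrite !(rmorphM, rmorphXn, rmorphN1, fmorphV, rmorph_nat) /=; ring.
have k_def : k = (k./2).*2 by rewrite -[LHS](odd_double_half k) (negbTE k_even).
rewrite [in 'i ^+ _]k_def i_double /= -?exprnP.
by rewrite !(rmorphM, rmorphXn, rmorphN1, fmorphV, rmorph_nat, rmorph0) /=; ring.
Qed.

Lemma cvg_exp_partial_expi (t : R) :
  exp_partial N ('i * t%:C) @[N --> \oo] --> expi t.
Proof.
have -> : (fun N => exp_partial N ('i * t%:C)) =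
    (fun N => (series (cos_coeff t) N)%:C + 'i * (series (sin_coeff t) N)%:C).
  apply/funext => N; rewrite /exp_partial /series /= !big_mkord.
  under eq_bigr do rewrite exp_partial_termE.
  by rewrite big_split /= -mulr_sumr -!rmorph_sum.
have cvg_cos : series (cos_coeff t) @ \oo --> cos t.
  by rewrite cosE /= -cos_coeffE; exact: is_cvg_series_cos_coeff.
have cvg_sin : series (sin_coeff t) @ \oo --> sin t.
  by rewrite unlock; exact: is_cvg_series_sin_coeff.
apply: cvgD; first exact: cvg_complex_real.
by apply: cvgMl_tmp; exact: cvg_complex_real.
Qed.

Lemma expiD a b : expi (a + b) = expi a * expi b.
Proof.
rewrite /expi cosD sinD !(rmorphB, rmorphD, rmorphM) /=.
have i2 : 'i * 'i = -1 :> C by rewrite -expr2 sqr_i.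
set ca := (cos a)%:C; set cb := (cos b)%:C; set sa := (sin a)%:C; set sb := (sin b)%:C.
have -> : (ca + 'i * sa) * (cb + 'i * sb) =
    ca * cb + ('i * 'i) * (sa * sb) + 'i * (sa * cb + ca * sb) by ring.
by rewrite i2; ring.
Qed.

Lemma expi_mulrn a k : expi (a *+ k) = expi a ^+ k.
Proof.
elim: k => [|k IHk]; last by rewrite mulrS expiD IHk exprS.
by rewrite mulr0n expr0 /expi cos0 sin0 rmorph0 rmorph1 mulr0 addr0.
Qed.

Lemma expi_pi : expi pi = -1.
Proof. by rewrite /expi cospi sinpi rmorph0 rmorphN1 mulr0 addr0. Qed.

End ImaginaryExponential.

Section MatrixExponential.
Variables (R : realType) (m : nat).
Local Notation C := (R[i] : numFieldType).

Definition expmx_partial (M : 'M[C]_m) (N : nat) : 'M[C]_m :=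
  \sum_(k < N) (k`!%:R)^-1 *: M ^+ k.

Lemma expmxE (M : 'M[C]_m) p q :
  expmx M p q = limn (fun N => expmx_partial M N p q : C).
Proof. by rewrite mxE. Qed.

Lemma expmx_partial_mul_eigen (M : 'M[C]_m) (v : 'cV[C]_m) l N :
  M *m v = l *: v -> expmx_partial M N *m v = exp_partial N l *: v.
Proof.
move=> Mv; have Mkv k : M ^+ k *m v = l ^+ k *: v.
  elim: k => [|k IHk]; first by rewrite !expr0 mul1mx scale1r.
  by rewrite exprSr -mulmxE -mulmxA Mv -scalemxAr IHk scalerA -exprS.
rewrite /expmx_partial mulmx_suml.
by under eq_bigr do rewrite -scalemxAl Mkv scalerA; rewrite -scaler_suml.
Qed.

(* The entries of [expmx M] are limits not known to exist in general, so the
   limit is only taken after expanding a column along eigenvectors. *)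
Lemma expmx_mul_eigensum (I : Type) (r : seq I) (M : 'M[C]_m)
    (v : I -> 'cV[C]_m) (l z : I -> C) j :
  (forall i, M *m v i = l i *: v i) ->
  (forall i, exp_partial N (l i) @[N --> \oo] --> z i) ->
  \sum_(i <- r) v i = delta_mx j 0 ->
  expmx M *m delta_mx j 0 = \sum_(i <- r) z i *: v i.
Proof.
move=> Mv cvg_l v_sum; apply/matrixP => p q; rewrite ord1 -colE mxE expmxE summxE.
have -> : (fun N => expmx_partial M N p j) =
    (fun N => \sum_(i <- r) exp_partial N (l i) * v i p 0).
  apply/funext => N; have -> : expmx_partial M N p j = col j (expmx_partial M N) p 0.
    by rewrite mxE.
  rewrite colE -v_sum mulmx_sumr summxE; apply: eq_bigr => i _.
  by rewrite (expmx_partial_mul_eigen _ (Mv i)) mxE.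
under eq_bigr do rewrite mxE.
apply: (@cvg_lim C); first exact: norm_hausdorff.
by apply: cvg_big => [|i _]; [exact: add_continuous | exact: cvgMr_tmp].
Qed.

End MatrixExponential.

Section LaplacianOnFunctions.
Variables (R : realType) (T : finType) (e : rel T).
Local Notation C := (R[i] : numFieldType).

Definition colf (f : T -> C) : 'cV[C]_#|T| := \col_p f (enum_val p).

Definition lapf (f : T -> C) (x : T) : C := \sum_y (e x y)%:R * (f x - f y).

Lemma degreeE x : (degree e x)%:R = \sum_y (e x y)%:R :> C.
Proof.
rewrite /degree -sum1_card natr_sum big_mkcond /=; apply: eq_bigr => y _.
by rewrite inE; case: (e x y).
Qed.

Lemma laplacian_mul_colf f : laplacian R e *m colf f = colf (lapf f).
Proof.
apply/matrixP => p q; rewrite !mxE /lapf.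
under eq_bigr do rewrite !mxE mulrBl (fun_if (fun z => z * _)) mul0r.
rewrite sumrB -big_mkcond /= (big_pred1 p) => [|j]; last by rewrite eq_sym.
rewrite -(big_enum_val (A := T) (fun y => (e (enum_val p) y)%:R * f y)) degreeE.
by rewrite mulr_suml -sumrB; apply: eq_bigr => y _; rewrite mulrBr.
Qed.

Lemma evecE a : evec R a = colf (fun x => (x == a)%:R).
Proof.
apply/matrixP => p q; rewrite !mxE ord1 eqxx andbT.
by rewrite -{1}(enum_valK p) (inj_eq enum_rank_inj).
Qed.

Lemma expmx_laplacian_evec (I : Type) (r : seq I) (lam : I -> R)
    (f : I -> T -> C) (a : T) (tau : R) :
  (forall i x, lapf (f i) x = (lam i)%:C * f i x) ->
  (forall x, \sum_(i <- r) f i x = (x == a)%:R) ->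
  expmx (('i * tau%:C) *: laplacian R e) *m evec R a =
    colf (fun x => \sum_(i <- r) expi (tau * lam i) * f i x).
Proof.
move=> f_eigen f_sum.
have Lf i : ('i * tau%:C) *: laplacian R e *m colf (f i) =
    ('i * (tau * lam i)%:C) *: colf (f i).
  apply/matrixP => p q.
  by rewrite -scalemxAl laplacian_mul_colf !mxE f_eigen rmorphM /= !mulrA.
have f_sum_col : \sum_(i <- r) colf (f i) = delta_mx (enum_rank a) 0.
  rewrite -/(evec R a) evecE; apply/matrixP => p q.
  by rewrite summxE !mxE -f_sum; apply: eq_bigr => i _; rewrite mxE.
rewrite (expmx_mul_eigensum Lf (fun i => @cvg_exp_partial_expi R (tau * lam i)) f_sum_col).
by apply/matrixP => p q; rewrite !mxE summxE; apply: eq_bigr => i _; rewrite !mxE.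
Qed.

End LaplacianOnFunctions.

Inductive star_mode := ModeConst | ModeRadial | ModeSwap.

Section BlownUpStar.
Variables (R : realType) (n : nat).
Local Notation C := (R[i] : numFieldType).
Local Notation T := ('I_2 * 'I_n.+1)%type.
Local Notation e := (blowup2 (star_graph n)).

Definition star_fun (g : 'I_2 -> C) (h : C) (x : T) : C :=
  if x.2 == ord0 then g x.1 else h.

Lemma lapf_star_fun g h x : lapf e (star_fun g h) x =
  if x.2 == ord0 then (g x.1 - h) *+ (2 * n) else h *+ 2 - g ord0 - g ord_max.
Proof.
have sum_pair (F : T -> C) : \sum_y F y = \sum_(l < 2) \sum_(c < n.+1) F (l, c).
  by rewrite pair_bigA; apply: eq_bigr => -[].
have lift_max : lift ord0 ord0 = ord_max :> 'I_2 by exact: val_inj.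
case: x => l c /=; rewrite /lapf sum_pair !big_ord_recl !big_ord0 !addr0 lift_max.
rewrite /blowup2 /star_graph /star_fun /=.
under eq_bigr do rewrite (eq_sym (lift _ _)) (negbTE (neq_lift _ _)).
case: (c == ord0) => /=; rewrite !sumr_const card_ord !mul1r ?mul0r ?add0r ?addr0.
  by rewrite -mulrnDr addnn -mul2n.
by rewrite mul0rn !addr0 mulr2n addrACA addrA.
Qed.

Definition mode_exponent (k : star_mode) : nat :=
  match k with ModeConst => 0 | ModeRadial => n.+1 | ModeSwap => n end.

Definition mode_fun (k : star_mode) : T -> C :=
  let d := (2 * (n%:R + 1))^-1 in
  match k with
  | ModeConst => star_fun (fun _ => d) d
  | ModeRadial => star_fun (fun _ => n%:R * d) (- d)
  | ModeSwap => star_fun (fun l => if l == ord0 then 2^-1 else - 2^-1) 0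
  end.

Let two_neq0 : (2 : C) != 0. Proof. by rewrite pnatr_eq0. Qed.
Let nS_neq0 : (n%:R + 1 : C) != 0. Proof. by rewrite natr1 pnatr_eq0. Qed.

Lemma lapf_mode_fun k x :
  lapf e (mode_fun k) x = (2 *+ mode_exponent k : R)%:C * mode_fun k x.
Proof.
rewrite rmorphMn /= rmorph_nat.
case: k; rewrite /= lapf_star_fun /star_fun; case: ifP => _ //;
  rewrite ?mulr2n ?mul0rn ?subr0 ?mulr0 ?addr0 ?sub0r ?opprK ?subrr //.
all: try (field; by rewrite ?mulf_neq0).
by set y := (if _ then _ else _); ring.
Qed.

Definition star_modes := [:: ModeConst; ModeRadial; ModeSwap].

Lemma sum_mode_fun x :
  \sum_(k <- star_modes) mode_fun k x = (x == (ord0, ord0))%:R.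
Proof.
case: x => l c; rewrite !big_cons big_nil /= /star_fun xpair_eqE /=.
case: (c == ord0); last by rewrite andbF !addr0 addrN.
by rewrite andbT; case: (l == ord0) => /=; field; rewrite ?mulf_neq0.
Qed.

Definition star_walk (w : C) (x : T) : C :=
  \sum_(k <- star_modes) w ^+ mode_exponent k * mode_fun k x.

Lemma expmx_star_evec (tau : R) :
  expmx (('i * tau%:C) *: laplacian R e) *m evec R ((ord0, ord0) : T) =
    colf (star_walk (expi (tau * 2))).
Proof.
rewrite (expmx_laplacian_evec (r := star_modes) (lam := fun k => 2 *+ mode_exponent k)
  tau lapf_mode_fun sum_mode_fun).
by congr colf; apply/funext => x; apply: eq_bigr => k _; rewrite mulrnAr expi_mulrn.
Qed.

Lemma star_walkE w l c : star_walk w (l, c) =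
  if c == ord0 then
    (1 + n%:R * w ^+ n.+1) / (2 * (n%:R + 1)) +
      (if l == ord0 then w ^+ n / 2 else - (w ^+ n / 2))
  else (1 - w ^+ n.+1) / (2 * (n%:R + 1)).
Proof.
rewrite /star_walk !big_cons big_nil /= /star_fun.
by case: ifP => _; [case: ifP => _|]; field; rewrite ?mulf_neq0.
Qed.

Hypothesis n_gt0 : (0 < n)%N.

Lemma star_walk_transfer (w : C) :
  (exists g : C, colf (star_walk w) = g *: evec R ((ord_max, ord0) : T)) <->
  w ^+ n.+1 = 1 /\ w ^+ n = -1.
Proof.
have d_neq0 : (2 * (n%:R + 1) : C) != 0 by rewrite mulf_neq0.
have ord0_max : (ord0 == ord_max :> 'I_2) = false by [].
split => [[g walk_g] | [wSn wn]].
- have walk_at x : star_walk w x = g * (x == (ord_max, ord0))%:R.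
    by move/matrixP/(_ (enum_rank x) 0): walk_g; rewrite evecE !mxE enum_rankK.
  have wSn : w ^+ n.+1 = 1.
    have := walk_at (ord0, lift ord0 (Ordinal n_gt0)).
    rewrite star_walkE (eq_sym (lift _ _)) (negbTE (neq_lift _ _)) xpair_eqE andbF.
    rewrite mulr0 => /eqP.
    by rewrite mulf_eq0 invr_eq0 (negbTE d_neq0) orbF subr_eq0 => /eqP.
  split=> //; have := walk_at (ord0, ord0).
  have half : (1 + n%:R * 1) / (2 * (n%:R + 1)) = 2^-1 :> C by field.
  rewrite star_walkE eqxx xpair_eqE ord0_max wSn half mulr0 => /eqP.
  rewrite addrC addr_eq0 => /eqP wn_half.
  by apply: (mulIf (invr_neq0 two_neq0)); rewrite wn_half mulN1r.
- exists 1; apply/matrixP => p q; rewrite ord1 evecE !mxE.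
  case: (enum_val p) => l c; rewrite star_walkE wSn wn xpair_eqE mul1r.
  case: (c == ord0); last by rewrite andbF subrr mul0r.
  have [->|->] : l = ord0 \/ l = ord_max.
    by case: l => [[|[|//]]] ?; [left|right]; apply: val_inj.
  + by rewrite eqxx andbT ord0_max mulr0n; field.
  + by rewrite eq_sym ord0_max eqxx andbT mulr1n; field.
Qed.

End BlownUpStar.

Theorem corollary11 (R : realType) (n : nat) (hn : (1 <= n)%N) :
  lap_PST R (blowup2 (star_graph n)) (@ord0 1, @ord0 n) (@ord_max 1, @ord0 n) <-> odd n.
Proof.
split.
- case=> tau [_ [g]]; rewrite expmx_star_evec => walk_g.
  have [wSn wn] := (star_walk_transfer hn _).1 (ex_intro _ g walk_g).
  exact: odd_of_exprS_eq1 wSn wn.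
- move=> n_odd; exists (pi / 2); split; first by rewrite divr_gt0 ?pi_gt0.
  rewrite expmx_star_evec divfK ?pnatr_eq0 // expi_pi.
  apply/star_walk_transfer => //.
  by rewrite exprS -signr_odd n_odd expr1 mulrNN mulr1.
Qed.
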